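(* Let $l,d\ge 1$ and let $(X,Y)$ be a random vector in $\mathbb{R}^l\times\mathbb{R}^d$ with joint law $W$. Let $\rho:\mathbb{R}^l\to\mathbb{R}$ be a polynomial of degree at most $1$ with $\rho(X)\neq 0$ almost surely, and assume that the random vector $Z:=Y/\rho(X)\in\mathbb{R}^d$ is independent of $X$. Let $W_X$ and $W_Z$ denote the laws of $X$ and $Z$, and assume $X$ and $Z$ have finite moments of all orders. For each $m\in\mathbb{N}=\{0,1,2,\dots\}$ let $\{P^{(m)}_k:k\in\mathbb{N}^l\}$ be polynomials on $\mathbb{R}^l$, $P^{(m)}_k$ of total degree $|k|$, such that $\int P^{(m)}_kP^{(m)}_{k'}\,\rho(x)^{2m}\,W_X(dx)=0$ whenever $k\neq k'$; and let $\{R_s:s\in\mathbb{N}^d\}$ be polynomials on $\mathbb{R}^d$, $R_s$ of total degree $|s|$, such that $\int R_sR_{s'}\,dW_Z=0$ whenever $s\ne s'$. For $n=(k,s)\in\mathbb{N}^{l}\times\mathbb{N}^d$ define $$G_n(x,y)=P^{(|s|)}_k(x)\,\rho(x)^{|s|}\,R_s\!\left(\frac{y}{\rho(x)}\right).$$ Then each $G_n$ is a polynomial in $(x,y)$ of total degree $|n|=|k|+|s|$, and for $n=(k,s)$, $n'=(k',s')$, $$\int G_n G_{n'}\,dW=\delta_{nn'}\int \big(P^{(|s|)}_k\big)^2\rho^{2|s|}\,dW_X\int R_s^2\,dW_Z .$$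
   Context: For $z\in\mathbb{R}^d$ (or a multi-index), $|z|=\sum_i z_i$. $\delta_{nn'}$ is the Kronecker delta. *)

From HB Require Import structures.
From mathcomp Require Import all_boot all_order all_algebra.
From mathcomp Require mpoly.
Module MPSize.
Import mpoly.
(* msz p = msize p = 1 + total degree of p, and 0 for p = 0 *)
Definition msz {n : nat} {R : ringType} (p : mpoly.mpoly n R) : nat := msize p.
End MPSize.
Notation msz := MPSize.msz.
From mathcomp Require Import all_classical all_reals all_analysis.

Set Implicit Arguments.
Unset Strict Implicit.
Unset Printing Implicit Defensive.

Import Order.TTheory GRing.Theory Num.Theory.
Local Open Scope classical_set_scope.
Local Open Scope ring_scope.

Notation mpol n R := (mpoly.mpoly n R).
Notation mindex n := (mpoly.multinom n).
Notation mideg k := (mpoly.mdeg k).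
Notation peval v p := (mpoly.meval v p).

Definition catv (R : Type) (l d : nat) (x : 'I_l -> R) (y : 'I_d -> R)
  : 'I_(l + d) -> R :=
  fun i => match fintype.split i with inl a => x a | inr b => y b end.

Definition vec_at (T R : Type) (n : nat) (X : 'I_n -> T -> R) (w : T) : 'I_n -> R :=
  fun i => X i w.

Definition Zof (R : realType) (T : Type) (l d : nat) (rho : mpol l R)
  (X : 'I_l -> T -> R) (Y : 'I_d -> T -> R) : 'I_d -> T -> R :=
  fun j w => Y j w / peval (vec_at X w) rho.

(* Independence of the random vectors X : T -> R^l and Z : T -> R^d under P:
   the product rule on the generating pi-systems of measurable rectangles,
   i.e. independence of sigma(X) and sigma(Z). *)
Definition indep_vec (R : realType) (dT : measure_display) (T : measurableType dT)
  (P : probability T R) (l d : nat) (X : 'I_l -> T -> R) (Z : 'I_d -> T -> R) : Prop :=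
  forall (A : 'I_l -> set R) (B : 'I_d -> set R),
    (forall i, measurable (A i)) -> (forall j, measurable (B j)) ->
    P ([set w | forall i, A i (X i w)] `&` [set w | forall j, B j (Z j w)]) =
    (P [set w | forall i, A i (X i w)] * P [set w | forall j, B j (Z j w)])%E.

Definition Gfun (R : realType) (l d : nat) (rho : mpol l R)
  (Pp : nat -> mindex l -> mpol l R) (Rs : mindex d -> mpol d R)
  (k : mindex l) (s : mindex d) (x : 'I_l -> R) (y : 'I_d -> R) : R :=
  peval x (Pp (mideg s) k) * peval x rho ^+ mideg s *
  peval (fun j => y j / peval x rho) (Rs s).

(* G_n is P(x) times the homogenization rho(x)^|s| R_s(y / rho(x)) of R_s; since rho
   is affine this is a polynomial in (x, y) of degree |s|, the degree being exactly |s|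
   because the leading coefficient of R_s survives the substitution x := 0.
   For the orthogonality, G_n G_n' (X, Y) = (P P' rho^(|s|+|s'|))(X) (R_s R_s')(Z), and the
   independence of X and Z factorizes the expectation of any product of a polynomial in X
   and a polynomial in Z: the product rule on rectangles extends by linearity to simple
   functions of the coordinates, and then to monomials by approximating every coordinate
   by dyadic simple functions and passing to the limit by dominated convergence (all
   moments are finite). The orthogonality relations of the P^(m)_k and the R_s then give
   the Kronecker deltas. *)

From mathcomp Require Import all_boot all_order all_algebra.
From mathcomp Require mpoly.
From mathcomp Require Import zify ring.
Set Implicit Arguments.
Unset Strict Implicit.
Unset Printing Implicit Defensive.

(** * Homogenization *)

Module Homogenization.
Import mpoly GRing.Theory.
Local Open Scope ring_scope.

Section MSize.
Variable R : idomainType.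

Lemma msizeM_le_pred n (p q : {mpoly R[n]}) :
  (msize (p * q) <= (msize p + msize q).-1)%N.
Proof.
have [->|p0] := eqVneq p 0; first by rewrite mul0r msize0.
have [->|q0] := eqVneq q 0; first by rewrite mulr0 msize0.
by rewrite msizeM.
Qed.

Lemma msize_prod_le n (I : Type) (r : seq I) (P : pred I) (F : I -> {mpoly R[n]}) :
  (msize (\prod_(i <- r | P i) F i) <= (\sum_(i <- r | P i) (msize (F i)).-1).+1)%N.
Proof.
elim/big_rec2: _ => [|i s q _ IH]; first by rewrite msize1.
apply: leq_trans (msizeM_le_pred _ _) _.
by move: IH; case: (msize (F i)) => [|a] /=; case: (msize q) => [|b] /=; lia.
Qed.

Lemma msizeXn_le n (p : {mpoly R[n]}) b e :
  (msize p <= b.+1)%N -> (msize (p ^+ e) <= (e * b).+1)%N.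
Proof.
move=> hb; elim: e => [|e IH]; first by rewrite expr0 msize1.
rewrite exprS; apply: leq_trans (msizeM_le_pred _ _) _.
by move: IH hb; case: (msize p) => [|a]; case: (msize (p ^+ e)) => [|c] /=; nia.
Qed.

Lemma msize_comp_mpoly_le n k (p : {mpoly R[n]}) (lq : n.-tuple {mpoly R[k]}) b :
  (forall i, msize (tnth lq i) <= b.+1)%N ->
  (msize (p \mPo lq) <= ((msize p).-1 * b).+1)%N.
Proof.
move=> hb; rewrite comp_mpolyE; apply: leq_trans (msize_sum _ _ _) _.
rewrite big_seq_cond; elim/big_ind: _ => //; first by move=> x y; rewrite geq_max => -> ->.
move=> m /andP[mp _]; apply: leq_trans (msizeZ_le _ _) _.
apply: leq_trans (msize_prod_le _ _ _) _; rewrite ltnS.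
have : (mdeg m < msize p)%N by exact: msize_mdeg_lt.
rewrite mdegE => hm.
apply: (@leq_trans (\sum_(i < n) m i * b)%N).
  apply: leq_sum => i _.
  by have := msizeXn_le (m i) (hb i); case: (msize _) => [|c] /=; lia.
rewrite -big_distrl leq_mul2r; apply/orP; right.
by move: hm; case: (msize p).
Qed.

Lemma msize_comp_mpoly_linear_le n k (p : {mpoly R[n]}) (lq : n.-tuple {mpoly R[k]}) :
  (forall i, msize (tnth lq i) <= 2)%N -> (msize (p \mPo lq) <= msize p)%N.
Proof.
move=> hb; have [->|p0] := eqVneq p 0; first by rewrite comp_mpoly0 msize0.
by have := msize_comp_mpoly_le p hb; rewrite muln1 -(mpolySpred _ p0).
Qed.

Lemma msize_tnth_tuple_XU n k (f : 'I_n -> 'I_k) i :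
  (msize (tnth [tuple 'X_(f j) | j < n] i : {mpoly R[k]}) <= 2)%N.
Proof. by rewrite tnth_mktuple msizeX mdeg1. Qed.

End MSize.

Lemma comp_mpolyA (R : comNzRingType) n k j (p : {mpoly R[n]})
    (lq1 : n.-tuple {mpoly R[k]}) (lq2 : k.-tuple {mpoly R[j]}) :
  (p \mPo lq1) \mPo lq2 = p \mPo [tuple tnth lq1 i \mPo lq2 | i < n].
Proof.
rewrite [p \mPo lq1]comp_mpolyE [RHS]comp_mpolyE raddf_sum /=.
apply: eq_bigr => m _; rewrite linearZ /= rmorph_prod /=; congr (_ *: _).
by apply: eq_bigr => i _; rewrite rmorphXn tnth_mktuple.
Qed.

Section BlockVariables.
Variables (R : idomainType) (l d : nat).

(* The substitutions embedding [x] and [y] into [(x, y)], and their left inverses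
   setting the other block of variables to [0]. *)
Definition lshiftX : l.-tuple {mpoly R[l + d]} := [tuple 'X_(lshift d i) | i < l].
Definition rshiftX : d.-tuple {mpoly R[l + d]} := [tuple 'X_(rshift l j) | j < d].
Definition lrestrX : (l + d).-tuple {mpoly R[l]} :=
  [tuple if fintype.split i is inl a then 'X_a else 0 | i < l + d].
Definition rrestrX : (l + d).-tuple {mpoly R[d]} :=
  [tuple if fintype.split i is inr b then 'X_b else 0 | i < l + d].

Lemma msize_tnth_lrestrX i : (msize (tnth lrestrX i) <= 2)%N.
Proof. by rewrite tnth_mktuple; case: fintype.split => a; rewrite ?msizeX ?mdeg1 ?msize0. Qed.

Lemma msize_tnth_rrestrX i : (msize (tnth rrestrX i) <= 2)%N.
Proof. by rewrite tnth_mktuple; case: fintype.split => a; rewrite ?msizeX ?mdeg1 ?msize0. Qed.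

Lemma comp_lshiftX_lrestrX (p : {mpoly R[l]}) : p \mPo lshiftX \mPo lrestrX = p.
Proof.
rewrite comp_mpolyA -[RHS]comp_mpoly_id; congr (_ \mPo _).
apply: eq_from_tnth => i; rewrite !tnth_mktuple comp_mpolyXU -tnth_nth tnth_mktuple.
by rewrite (unsplitK (inl i)).
Qed.

Lemma comp_rshiftX_rrestrX (q : {mpoly R[d]}) : q \mPo rshiftX \mPo rrestrX = q.
Proof.
rewrite comp_mpolyA -[RHS]comp_mpoly_id; congr (_ \mPo _).
apply: eq_from_tnth => i; rewrite !tnth_mktuple comp_mpolyXU -tnth_nth tnth_mktuple.
by rewrite (unsplitK (inr i)).
Qed.

Lemma comp_lshiftX_rrestrX (p : {mpoly R[l]}) :
  p \mPo lshiftX \mPo rrestrX = ((p \mPo lshiftX \mPo rrestrX)@_0)%:MP.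
Proof.
apply: msize1_polyC; rewrite comp_mpolyA.
have := @msize_comp_mpoly_le _ _ _ p [tuple tnth lshiftX i \mPo rrestrX | i < l] 0.
rewrite muln0; apply => i.
by rewrite !tnth_mktuple comp_mpolyXU -tnth_nth tnth_mktuple (unsplitK (inl i)) msize0.
Qed.

Lemma msize_comp_lshiftX (p : {mpoly R[l]}) : msize (p \mPo lshiftX) = msize p.
Proof.
apply/eqP; rewrite eqn_leq -{3}(comp_lshiftX_lrestrX p) !msize_comp_mpoly_linear_le //.
  exact: msize_tnth_lrestrX.
exact: msize_tnth_tuple_XU.
Qed.

Lemma meval_comp_lshiftX (x : 'I_l -> R) (y : 'I_d -> R) (p : {mpoly R[l]}) :
  (p \mPo lshiftX).@[catv x y] = p.@[x].
Proof.
rewrite comp_mpoly_meval; apply: meval_eq => i.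
by rewrite tnth_mktuple mevalXU /catv (unsplitK (inl i)).
Qed.

Lemma meval_comp_rshiftX (x : 'I_l -> R) (y : 'I_d -> R) (q : {mpoly R[d]}) :
  (q \mPo rshiftX).@[catv x y] = q.@[y].
Proof.
rewrite comp_mpoly_meval; apply: meval_eq => i.
by rewrite tnth_mktuple mevalXU /catv (unsplitK (inr i)).
Qed.

End BlockVariables.

Arguments lshiftX {R l d}.
Arguments rshiftX {R l d}.
Arguments lrestrX {R l d}.
Arguments rrestrX {R l d}.

Section Homogenize.
Variables (R : fieldType) (l d : nat) (rho : {mpoly R[l]}) (q : {mpoly R[d]}) (S : nat).
Hypotheses (rho_affine : (msize rho <= 2)%N) (size_q : msize q = S.+1).

(* The polynomial [rho(x)^S q(y / rho(x))] in [(x, y)]. *)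
Definition homogenize : {mpoly R[l + d]} :=
  \sum_(a <- msupp q)
     q@_a *: (('X_[a] \mPo rshiftX) * (rho \mPo lshiftX) ^+ (S - mdeg a)).

Lemma mdeg_msupp_le a : a \in msupp q -> (mdeg a <= S)%N.
Proof. by move=> aq; rewrite -ltnS -size_q; exact: msize_mdeg_lt. Qed.

Lemma msize_homogenize_le : (msize homogenize <= S.+1)%N.
Proof.
apply: leq_trans (msize_sum _ _ _) _; rewrite big_seq_cond.
elim/big_ind: _ => //; first by move=> u v; rewrite geq_max => -> ->.
move=> a /andP[aq _]; apply: leq_trans (msizeZ_le _ _) _.
apply: leq_trans (msizeM_le_pred _ _) _.
have hX : (msize ('X_[a] \mPo @rshiftX R l d) <= (mdeg a).+1)%N.
  rewrite -(msizeX R a); apply: msize_comp_mpoly_linear_le => i.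
  exact: msize_tnth_tuple_XU.
have hrho : (msize ((rho \mPo @lshiftX R l d) ^+ (S - mdeg a)) <= (S - mdeg a).+1)%N.
  by rewrite -[X in X.+1]muln1; apply: msizeXn_le; rewrite msize_comp_lshiftX.
have := mdeg_msupp_le aq; move: hX hrho.
by case: (msize (_ \mPo _)) => [|u]; case: (msize (_ ^+ _)) => [|v] /=; lia.
Qed.

(* Setting [x = 0] turns [homogenize] into [q] with rescaled coefficients,
   and the leading monomial of [q] keeps its coefficient. *)
Lemma msize_homogenize : msize homogenize = S.+1.
Proof.
apply/eqP; rewrite eqn_leq msize_homogenize_le /=.
pose c := (rho \mPo @lshiftX R l d \mPo @rrestrX R l d)@_0.
have hq0 : homogenize \mPo rrestrX =
    \sum_(a <- msupp q) (q@_a * c ^+ (S - mdeg a)) *: 'X_[a].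
  rewrite raddf_sum /=; apply: eq_bigr => a _.
  rewrite comp_mpolyZ rmorphM rmorphXn /= comp_rshiftX_rrestrX comp_lshiftX_rrestrX -/c.
  by rewrite -rmorphXn /= mulrC mul_mpolyC scalerA.
have q0 : q != 0 by rewrite -msize_poly_eq0 size_q.
have lead_q : mlead q \in msupp q by exact: mlead_supp.
have deg_lead : mdeg (mlead q) = S by apply/eqP; rewrite -eqSS mlead_deg // size_q.
have coef_lead : (homogenize \mPo rrestrX)@_(mlead q) = q@_(mlead q).
  rewrite hq0 raddf_sum /= (bigD1_seq (mlead q)) ?msupp_uniq //= big1_seq.
    by rewrite mcoeffZ mcoeffX eqxx mulr1 deg_lead subnn expr0 mulr1 addr0.
  by move=> a /andP[aq _]; rewrite mcoeffZ mcoeffX (negbTE aq) mulr0.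
apply: leq_trans (msize_comp_mpoly_linear_le _ (@msize_tnth_rrestrX _ _ _)).
by rewrite -deg_lead; apply: msize_mdeg_lt; rewrite mcoeff_msupp coef_lead -mcoeff_msupp.
Qed.

Lemma meval_homogenize (x : 'I_l -> R) (y : 'I_d -> R) : rho.@[x] != 0 ->
  homogenize.@[catv x y] = rho.@[x] ^+ S * q.@[fun j => y j / rho.@[x]].
Proof.
move=> r0; set r := rho.@[x].
rewrite raddf_sum (mevalE _ q) mulr_sumr; apply: eq_big_seq => a aq /=.
rewrite mevalZ mevalM meval_comp_rshiftX rmorphXn /= meval_comp_lshiftX mevalX -/r.
have -> : \prod_i (y i / r) ^+ a i = (\prod_i y i ^+ a i) * r^-1 ^+ mdeg a.
  by rewrite mdegE -prodrXr -big_split /=; apply: eq_bigr => i _; rewrite exprMn.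
rewrite -[in r ^+ S](subnK (mdeg_msupp_le aq)) exprD exprVn.
have ra : r ^+ mdeg a != 0 by rewrite expf_neq0.
by field.
Qed.

End Homogenize.

Lemma homogenized_product_mpoly (R : fieldType) (l d : nat)
    (rho p : {mpoly R[l]}) (q : {mpoly R[d]}) K S :
  (msize rho <= 2)%N -> msize p = K.+1 -> msize q = S.+1 ->
  exists g : {mpoly R[l + d]}, msize g = (K + S).+1 /\
   forall x y, rho.@[x] != 0 ->
     g.@[catv x y] = p.@[x] * rho.@[x] ^+ S * q.@[fun j => y j / rho.@[x]].
Proof.
move=> hrho hp hq.
have p0 : p \mPo @lshiftX R l d != 0 by rewrite -msize_poly_eq0 msize_comp_lshiftX hp.
have h0 : homogenize rho q S != 0 by rewrite -msize_poly_eq0 msize_homogenize.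
exists ((p \mPo lshiftX) * homogenize rho q S); split.
  by rewrite msizeM // msize_comp_lshiftX hp msize_homogenize // addSn addnS.
by move=> x y r0; rewrite mevalM meval_comp_lshiftX meval_homogenize // mulrA.
Qed.

End Homogenization.

From mathcomp Require Import all_classical all_reals all_analysis.
From mathcomp Require Import measurable_realfun lra.
Import Order.TTheory GRing.Theory Num.Theory.
Import numFieldNormedType.Exports.
(* A full [Import mpoly] would clash with the notations of mathcomp-analysis. *)
Import (canonicals, coercions) mpoly.
Local Open Scope classical_set_scope.
Local Open Scope ring_scope.

(** * Independence and polynomials in X and Z *)

Section BoundedMeasurable.
Context d (T : measurableType d) (R : realType).

Definition bounded_measurable (f : T -> R) :=
  measurable_fun setT f /\ exists M, forall w, `|f w| <= M.

Lemma bounded_measurable_integrable (mu : {finite_measure set T -> \bar R}) f :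
  bounded_measurable f -> mu.-integrable setT (EFin \o f).
Proof.
move=> [mf [M hM]]; apply: (@le_integrable _ _ _ _ _ _ _ (EFin \o cst M)) => //.
- exact/measurable_EFinP.
- by move=> w _ /=; rewrite !lee_fin (le_trans (hM w)) ?ler_norm.
- exact: finite_measure_integrable_cst.
Qed.

Lemma bounded_measurableD f g :
  bounded_measurable f -> bounded_measurable g -> bounded_measurable (f \+ g).
Proof.
move=> [mf [M hM]] [mg [N hN]]; split; first exact: measurable_funD.
by exists (M + N) => w; rewrite (le_trans (ler_normD _ _)) ?lerD.
Qed.

Lemma bounded_measurableM f g :
  bounded_measurable f -> bounded_measurable g -> bounded_measurable (f \* g).
Proof.
move=> [mf [M hM]] [mg [N hN]]; split; first exact: measurable_funM.
by exists (M * N) => w /=; rewrite normrM ler_pM.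
Qed.

Lemma bounded_measurable_cst c : bounded_measurable (cst c).
Proof. by split => //; exists `|c|. Qed.

Lemma bounded_measurable_indic (A : set T) : measurable A -> bounded_measurable (\1_A).
Proof.
move=> mA; split; first exact: measurable_indic.
by exists 1 => w; rewrite indicE; case: (w \in A); rewrite ?normr1 ?normr0.
Qed.

End BoundedMeasurable.

Section RectSimple.
Context d (T : measurableType d) (R : realType) (n : nat) (V : 'I_n -> T -> R).

Definition rect (A : 'I_n -> set R) : set T := [set w | forall i, A i (V i w)].

Inductive rect_simple : (T -> R) -> Prop :=
 | rect_simple_indic A : (forall i, measurable (A i)) -> rect_simple (\1_(rect A))
 | rect_simpleD f g : rect_simple f -> rect_simple g -> rect_simple (f \+ g)
 | rect_simpleZ c f : rect_simple f -> rect_simple (fun w => c * f w).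

Lemma rectI A B : rect (fun i => A i `&` B i) = rect A `&` rect B.
Proof.
apply/seteqP; split => w /= h; last by move=> i; split; [exact: h.1 | exact: h.2].
by split => i; case: (h i).
Qed.

Lemma rect_measurable A : (forall i, measurable_fun setT (V i)) ->
  (forall i, measurable (A i)) -> measurable (rect A).
Proof.
move=> mV mA.
have -> : rect A = \bigcap_(i in [set: 'I_n]) (setT `&` V i @^-1` A i).
  by apply/seteqP; split => w /= h i; [move=> _; split => //; exact: h | case: (h i I)].
by apply: fin_bigcap_measurable => [|i _]; [exact: finite_finset | exact: mV].
Qed.

Lemma rect_simple_bounded f : (forall i, measurable_fun setT (V i)) ->
  rect_simple f -> bounded_measurable f.
Proof.
move=> mV; elim => [A mA|f1 f2 _ h1 _ h2|c f1 _ h1].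
- exact: bounded_measurable_indic (rect_measurable mV mA).
- exact: bounded_measurableD.
- by apply: bounded_measurableM => //; exact: bounded_measurable_cst.
Qed.

Lemma rect_simple_indicM A f : (forall i, measurable (A i)) ->
  rect_simple f -> rect_simple (\1_(rect A) \* f).
Proof.
move=> mA; elim => [B mB|f1 f2 _ h1 _ h2|c f1 _ h1].
- by rewrite -indicI -rectI; apply: rect_simple_indic => i; exact: measurableI.
- have -> : \1_(rect A) \* (f1 \+ f2) = (\1_(rect A) \* f1) \+ (\1_(rect A) \* f2).
    by apply/funext => w /=; rewrite mulrDr.
  exact: rect_simpleD.
- have -> : \1_(rect A) \* (fun w => c * f1 w) = (fun w => c * (\1_(rect A) \* f1) w).
    by apply/funext => w /=; rewrite mulrCA.
  exact: rect_simpleZ.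
Qed.

Lemma rect_simpleM f g : rect_simple f -> rect_simple g -> rect_simple (f \* g).
Proof.
move=> hf hg; elim: hf => [A mA|f1 f2 _ h1 _ h2|c f1 _ h1]; first exact: rect_simple_indicM.
- have -> : (f1 \+ f2) \* g = (f1 \* g) \+ (f2 \* g) by apply/funext => w /=; rewrite mulrDl.
  exact: rect_simpleD.
- have -> : (fun w => c * f1 w) \* g = (fun w => c * (f1 \* g) w).
    by apply/funext => w /=; rewrite mulrA.
  exact: rect_simpleZ.
Qed.

Lemma rect_simple1 : rect_simple (cst 1).
Proof.
rewrite (_ : cst 1 = \1_(rect (fun=> setT))); first exact: rect_simple_indic.
by apply/funext => w; rewrite indicE mem_set.
Qed.

Lemma rect_simple_sum (I : Type) (r : seq I) (F : I -> T -> R) :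
  (forall i, rect_simple (F i)) -> rect_simple (fun w => \sum_(i <- r) F i w).
Proof.
move=> hF; elim: r => [|a r IH].
  under eq_fun do rewrite big_nil -(mul0r 1).
  exact/rect_simpleZ/rect_simple1.
by under eq_fun do rewrite big_cons; exact: rect_simpleD.
Qed.

Lemma rect_simple_prod (I : Type) (r : seq I) (F : I -> T -> R) :
  (forall i, rect_simple (F i)) -> rect_simple (fun w => \prod_(i <- r) F i w).
Proof.
move=> hF; elim: r => [|a r IH]; first by under eq_fun do rewrite big_nil; exact: rect_simple1.
by under eq_fun do rewrite big_cons; exact: rect_simpleM.
Qed.

Lemma rect_simpleX f e : rect_simple f -> rect_simple (fun w => f w ^+ e).
Proof.
have -> : (fun w => f w ^+ e) = (fun w => \prod_(i < e) f w).
  by apply/funext => w; rewrite prodr_const card_ord.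
by move=> hf; exact: rect_simple_prod.
Qed.

Lemma rect_simple_indic_coord i (S : set R) : measurable S ->
  rect_simple (fun w => \1_S (V i w)).
Proof.
move=> mS; pose A j := if j == i then S else setT.
rewrite (_ : (fun w => _) = \1_(rect A)).
  by apply: rect_simple_indic => j; rewrite /A; case: eqP.
apply/funext => w; rewrite !indicE; congr ((_ : bool)%:R); apply/idP/idP; rewrite !inE.
  by move=> Sw j; rewrite /A; case: eqP => // ->.
by move/(_ i); rewrite /A eqxx.
Qed.

End RectSimple.

Section RintegralFacts.
Context d (T : measurableType d) (R : realType) (mu : {measure set T -> \bar R}).

Lemma integrableZl_EFin (c : R) (f : T -> R) : mu.-integrable setT (EFin \o f) ->
  mu.-integrable setT (EFin \o (fun w => c * f w)).
Proof.
by move=> hf; apply: eq_integrable (integrableZl _ c hf) => //= w _; rewrite EFinM.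
Qed.

Lemma Rintegral_sum (I : Type) (r : seq I) (F : I -> T -> R) :
  (forall i, mu.-integrable setT (EFin \o F i)) ->
  \int[mu]_w (\sum_(i <- r) F i w) = \sum_(i <- r) \int[mu]_w F i w.
Proof.
move=> iF; elim: r => [|a r IH].
  by under eq_Rintegral do rewrite big_nil; rewrite big_nil /Rintegral integral0.
under eq_Rintegral do rewrite big_cons.
rewrite big_cons RintegralD // ?IH //.
have -> : EFin \o (fun w => \sum_(i <- r) F i w) = (fun w => \sum_(i <- r) (F i w)%:E).
  by apply/funext => w /=; rewrite sumEFin.
by apply: integrable_sum => // i _; exact: iF.
Qed.

Lemma integrable_mul_sq (f g : T -> R) :
  measurable_fun setT f -> measurable_fun setT g ->
  mu.-integrable setT (EFin \o (fun w => f w ^+ 2)) ->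
  mu.-integrable setT (EFin \o (fun w => g w ^+ 2)) ->
  mu.-integrable setT (EFin \o (f \* g)).
Proof.
move=> mf mg if2 ig2.
apply: (@le_integrable _ _ _ _ _ _ _ (EFin \o (fun w => f w ^+ 2 + g w ^+ 2))) => //.
- exact/measurable_EFinP/measurable_funM.
- move=> w _ /=; rewrite !lee_fin normrM [X in _ <= X]ger0_norm ?addr_ge0 ?sqr_ge0 //.
  rewrite -[f w ^+ 2]real_normK ?num_real // -[g w ^+ 2]real_normK ?num_real //.
  by have := normr_ge0 (f w); have := normr_ge0 (g w); nra.
- exact: (integrableD _ if2 ig2).
Qed.

Lemma dominated_cvg_Rintegral (u : nat -> T -> R) (f g : T -> R) :
  (forall k, measurable_fun setT (u k)) -> measurable_fun setT f ->
  (forall w, (fun k => u k w) @ \oo --> f w) ->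
  mu.-integrable setT (EFin \o g) -> (forall k w, `|u k w| <= g w) ->
  (fun k => \int[mu]_w u k w) @ \oo --> \int[mu]_w f w.
Proof.
move=> mu_ mf uf ig ug.
have [|||||intf _] := @dominated_convergence _ _ _ mu setT measurableT
  (fun k w => (u k w)%:E) (EFin \o f) (EFin \o g).
- by move=> k; exact/measurable_EFinP.
- exact/measurable_EFinP.
- by apply: aeW => w _; apply: cvg_EFin; [exact: nearW | exact: uf].
- exact: ig.
- by apply: aeW => w k _; rewrite lee_fin.
rewrite -(fineK (integrable_fin_num _ intf)) //.
exact: fine_cvg.
Qed.

End RintegralFacts.

Section Factorization.
Context d (T : measurableType d) (R : realType) (mu : {finite_measure set T -> \bar R}).

Definition factorizes (f g : T -> R) :=
  \int[mu]_w (f w * g w) = \int[mu]_w f w * \int[mu]_w g w.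

Lemma factorizesC f g : factorizes f g -> factorizes g f.
Proof. by rewrite /factorizes mulrC; under eq_Rintegral do rewrite mulrC. Qed.

Lemma factorizesDl f1 f2 g : bounded_measurable f1 -> bounded_measurable f2 ->
  bounded_measurable g -> factorizes f1 g -> factorizes f2 g -> factorizes (f1 \+ f2) g.
Proof.
move=> b1 b2 bg h1 h2; rewrite /factorizes.
under eq_Rintegral do rewrite mulrDl.
rewrite !RintegralD // ?h1 ?h2 ?mulrDl //; apply: bounded_measurable_integrable => //.
  exact: bounded_measurableM.
exact: bounded_measurableM.
Qed.

Lemma factorizesZl c f g : bounded_measurable f -> bounded_measurable g ->
  factorizes f g -> factorizes (fun w => c * f w) g.
Proof.
move=> bf bg h; rewrite /factorizes.
under eq_Rintegral do rewrite -mulrA.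
rewrite !RintegralZl // ?h ?mulrA //; apply: bounded_measurable_integrable => //.
exact: bounded_measurableM.
Qed.

Lemma factorizes_suml (I : Type) (r : seq I) (c : I -> R) (F : I -> T -> R) g :
  (forall i, mu.-integrable setT (EFin \o F i)) ->
  (forall i, mu.-integrable setT (EFin \o (F i \* g))) ->
  (forall i, factorizes (F i) g) ->
  factorizes (fun w => \sum_(i <- r) c i * F i w) g.
Proof.
move=> iF iFg hF; rewrite /factorizes.
under eq_Rintegral do rewrite mulr_suml.
rewrite !Rintegral_sum => [|i|i]; first last.
- by apply: eq_integrable (integrableZl_EFin (c i) (iFg i)) => // w _ /=; rewrite mulrA.
- exact: integrableZl_EFin.
rewrite mulr_suml; apply: eq_bigr => i _.
under eq_Rintegral do rewrite -mulrA.
have iFgi : mu.-integrable setT (EFin \o (fun w => F i w * g w)) := iFg i.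
by rewrite !RintegralZl // hF mulrA.
Qed.

End Factorization.

Section RectSimpleFactorization.
Context d (T : measurableType d) (R : realType) (P : probability T R).
Variables (n1 n2 : nat) (V1 : 'I_n1 -> T -> R) (V2 : 'I_n2 -> T -> R).
Hypotheses (mV1 : forall i, measurable_fun setT (V1 i))
  (mV2 : forall i, measurable_fun setT (V2 i)) (V12 : indep_vec P V1 V2).

Lemma factorizes_indic_rect A B : (forall i, measurable (A i)) ->
  (forall j, measurable (B j)) -> factorizes P (\1_(rect V1 A)) (\1_(rect V2 B)).
Proof.
move=> mA mB; have mrA := rect_measurable mV1 mA; have mrB := rect_measurable mV2 mB.
rewrite /factorizes (@eq_Rintegral _ _ _ P setT (\1_(rect V1 A `&` rect V2 B))); last first.
  by move=> w _; rewrite indicI.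
rewrite /Rintegral !integral_indic ?setIT //; last exact: measurableI.
by rewrite -fineM ?fin_num_measure //; congr fine; exact: V12.
Qed.

Lemma rect_simple_factorizes f g : rect_simple V1 f -> rect_simple V2 g ->
  factorizes P f g.
Proof.
have bd1 := rect_simple_bounded mV1; have bd2 := rect_simple_bounded mV2.
move=> hf hg; elim: hf => [A mA|f1 f2 s1 h1 s2 h2|c f1 s1 h1].
- apply: factorizesC; elim: hg => [B mB|g1 g2 t1 k1 t2 k2|c g1 t1 k1].
  + exact/factorizesC/factorizes_indic_rect.
  + by apply: factorizesDl => //; [exact: bd2 | exact: bd2 | exact/bd1/rect_simple_indic].
  + by apply: factorizesZl => //; [exact: bd2 | exact/bd1/rect_simple_indic].
- by apply: factorizesDl => //; [exact: bd1 | exact: bd1 | exact: bd2].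
- by apply: factorizesZl => //; [exact: bd1 | exact: bd2].
Qed.

End RectSimpleFactorization.

Section SignedApprox.
Context (R : realType).

Definition epos (x : R) : \bar R := (Num.max x 0)%:E.
Definition eneg (x : R) : \bar R := (Num.max (- x) 0)%:E.

(* Dyadic simple functions converging pointwise to the identity of [R]. *)
Definition sapprox n (x : R) := approx setT epos n x - approx setT eneg n x.

Lemma measurable_epos : measurable_fun setT epos.
Proof. exact/measurable_EFinP/measurable_maxr. Qed.

Lemma measurable_eneg : measurable_fun setT eneg.
Proof. exact/measurable_EFinP/measurable_maxr. Qed.

Lemma epos_ge0 x : setT x -> (0 <= epos x)%E.
Proof. by rewrite lee_fin le_max lexx orbT. Qed.

Lemma eneg_ge0 x : setT x -> (0 <= eneg x)%E.
Proof. by rewrite lee_fin le_max lexx orbT. Qed.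

Lemma approx_ge0 (f : R -> \bar R) n x : 0 <= approx setT f n x.
Proof.
by rewrite /approx addr_ge0 ?mulr_ge0 // sumr_ge0 // => k _; rewrite !mulr_ge0.
Qed.

Lemma sapprox_bound n x : `|sapprox n x| <= `|x|.
Proof.
have a0 := approx_ge0 epos n x; have b0 := approx_ge0 eneg n x.
have := le_approx n epos_ge0 (I : setT x); rewrite lee_fin => ha.
have := le_approx n eneg_ge0 (I : setT x); rewrite lee_fin => hb.
have h1 : Num.max x 0 <= `|x| by rewrite ge_max normr_ge0 ler_norm.
have h2 : Num.max (- x) 0 <= `|x| by rewrite ge_max normr_ge0 -normrN ler_norm.
by rewrite /sapprox ler_norml; apply/andP; split; lra.
Qed.

Lemma sapprox_cvg x : (fun n => sapprox n x) @ \oo --> x.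
Proof.
have {2}-> : x = Num.max x 0 - Num.max (- x) 0.
  have [x0|x0] := leP 0 x; first by rewrite max_r ?subr0 // oppr_le0.
  by rewrite max_l ?sub0r ?opprK // oppr_ge0 ltW.
apply: cvgB.
  exact: cvg_approx epos_ge0 (I : setT x) (ltry _).
exact: cvg_approx eneg_ge0 (I : setT x) (ltry _).
Qed.

End SignedApprox.

Section RectSimpleApprox.
Context d (T : measurableType d) (R : realType) (n : nat) (V : 'I_n -> T -> R).

Lemma rect_simple_approx (f : R -> \bar R) m i : measurable_fun setT f ->
  rect_simple V (fun w => approx setT f m (V i w)).
Proof.
move=> mf; apply: rect_simpleD.
  apply: (@rect_simple_sum _ _ _ _ _ _ _ (fun (k : 'I_(m * 2 ^ m)) w =>
    k%:R / 2 ^+ m * \1_(dyadic_approx setT f m k) (V i w))) => k.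
  apply/rect_simpleZ/rect_simple_indic_coord; rewrite /dyadic_approx; case: ifPn => // _.
  rewrite -preimage_comp; apply: mf => //.
  by apply/measurable_image_EFin; exact: measurable_itv.
by apply/rect_simpleZ/rect_simple_indic_coord; exact: emeasurable_fun_c_infty.
Qed.

Lemma rect_simple_sapprox m i : rect_simple V (fun w => sapprox m (V i w)).
Proof.
apply: rect_simpleD; first exact: rect_simple_approx (@measurable_epos R).
under eq_fun do rewrite -mulN1r.
exact/rect_simpleZ/(rect_simple_approx _ _ (@measurable_eneg R)).
Qed.

End RectSimpleApprox.

Lemma prod_expr_le (R : realDomainType) n (u : 'I_n -> R) (a : 'I_n -> nat) :
  (forall i, 0 <= u i) -> \prod_i u i ^+ a i <= 1 + \sum_i u i ^+ (\sum_j a j)%N.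
Proof.
case: n u a => [|n] u a u0; first by rewrite !big_ord0 lerDl.
have [j _ umax] := @arg_maxP _ _ _ ord0 xpredT u isT.
apply: (@le_trans _ _ (u j ^+ (\sum_i a i)%N)).
  rewrite -prodrXr; apply: ler_prod => i _.
  by rewrite exprn_ge0 //= lerXn2r ?nnegrE //; exact: umax.
have rest0 : 0 <= \sum_(i | i != j) u i ^+ (\sum_j a j)%N.
  by rewrite sumr_ge0 // => i _; rewrite exprn_ge0.
by rewrite [X in _ <= 1 + X](bigD1 j) //=; lra.
Qed.

Section Moments.
Context d (T : measurableType d) (R : realType) (mu : {finite_measure set T -> \bar R}).

Definition monomial n (V : 'I_n -> T -> R) (a : 'I_n -> nat) w := \prod_i V i w ^+ a i.

Variables (n : nat) (V : 'I_n -> T -> R).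
Hypotheses (mV : forall i, measurable_fun setT (V i))
  (momV : forall i p, mu.-integrable setT (fun w => (V i w ^+ p)%:E)).

Lemma monomial_measurable a : measurable_fun setT (monomial V a).
Proof. by apply: measurable_prod => i _; exact: measurable_funX. Qed.

Lemma monomial_integrable a : mu.-integrable setT (EFin \o monomial V a).
Proof.
set N := (\sum_j a j)%N.
apply: (@le_integrable _ _ _ _ _ _ _ (fun w => (1 + \sum_i `|V i w| ^+ N)%:E)) => //.
- exact/measurable_EFinP/monomial_measurable.
- move=> w _ /=; rewrite !lee_fin /monomial normr_prod (le_trans _ (ler_norm _)) //.
  by under eq_bigr do rewrite normrX; exact: prod_expr_le.
- under eq_fun do rewrite EFinD -sumEFin.
  apply: integrableD => //; first exact: finite_measure_integrable_cst.
  apply: integrable_sum => // i _.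
  by apply: eq_integrable (integrable_abse (momV i N)) => // w _ /=; rewrite normrX.
Qed.

Lemma monomial_sq_integrable a :
  mu.-integrable setT (EFin \o (fun w => monomial V a w ^+ 2)).
Proof.
have -> : (fun w => monomial V a w ^+ 2) = monomial V (fun i => (a i * 2)%N).
  by apply/funext => w; rewrite /monomial -prodrXl; apply: eq_bigr => i _; rewrite exprM.
exact: monomial_integrable.
Qed.

End Moments.

Section SapproxMonomial.
Context d (T : measurableType d) (R : realType).

Definition sapprox_rv n (V : 'I_n -> T -> R) k i w := sapprox k (V i w).

Variables (n : nat) (V : 'I_n -> T -> R).

Lemma rect_simple_monomial_sapprox k a : rect_simple V (monomial (sapprox_rv V k) a).
Proof. by apply: rect_simple_prod => i; apply: rect_simpleX; exact: rect_simple_sapprox. Qed.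

Lemma monomial_sapprox_bound k a w :
  `|monomial (sapprox_rv V k) a w| <= `|monomial V a w|.
Proof.
rewrite /monomial !normr_prod; apply: ler_prod => i _.
by rewrite normr_ge0 /= !normrX lerXn2r ?nnegrE // sapprox_bound.
Qed.

Lemma monomial_sapprox_cvg a w :
  (fun k => monomial (sapprox_rv V k) a w) @ \oo --> monomial V a w.
Proof.
apply: cvg_big => [|i _]; first exact: mul_continuous.
have hc : {for V i w, continuous (fun y : R => y ^+ a i)} by exact: exprn_continuous.
exact: (continuous_cvg _ hc (sapprox_cvg (x := V i w))).
Qed.

End SapproxMonomial.

Section SapproxMonomialIntegral.
Context d (T : measurableType d) (R : realType) (mu : {finite_measure set T -> \bar R}).
Variables (n : nat) (V : 'I_n -> T -> R).
Hypotheses (mV : forall i, measurable_fun setT (V i))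
  (momV : forall i p, mu.-integrable setT (fun w => (V i w ^+ p)%:E)).

Lemma monomial_sapprox_measurable k a : measurable_fun setT (monomial (sapprox_rv V k) a).
Proof. by case: (rect_simple_bounded mV (rect_simple_monomial_sapprox V k a)). Qed.

Lemma Rintegral_monomial_sapprox_cvg a :
  (fun k => \int[mu]_w monomial (sapprox_rv V k) a w) @ \oo --> \int[mu]_w monomial V a w.
Proof.
apply: (dominated_cvg_Rintegral (g := fun w => `|monomial V a w|)).
- by move=> k; exact: monomial_sapprox_measurable.
- exact: monomial_measurable.
- by move=> w; exact: monomial_sapprox_cvg.
- exact/integrable_norm/monomial_integrable.
- by move=> k w; exact: monomial_sapprox_bound.
Qed.

End SapproxMonomialIntegral.

Section MonomialFactorization.
Context d (T : measurableType d) (R : realType) (P : probability T R).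
Variables (n1 n2 : nat) (V1 : 'I_n1 -> T -> R) (V2 : 'I_n2 -> T -> R).
Hypotheses (mV1 : forall i, measurable_fun setT (V1 i))
  (mV2 : forall i, measurable_fun setT (V2 i))
  (mom1 : forall i p, P.-integrable setT (fun w => (V1 i w ^+ p)%:E))
  (mom2 : forall i p, P.-integrable setT (fun w => (V2 i w ^+ p)%:E))
  (V12 : indep_vec P V1 V2).

(* Dominated convergence from the factorization of the simple approximations. *)
Lemma monomial_factorizes a b : factorizes P (monomial V1 a) (monomial V2 b).
Proof.
pose f1 k := monomial (sapprox_rv V1 k) a; pose f2 k := monomial (sapprox_rv V2 k) b.
have lim12 : (fun k => \int[P]_w (f1 k w * f2 k w)) @ \oo -->
    \int[P]_w (monomial V1 a w * monomial V2 b w).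
  apply: (dominated_cvg_Rintegral (g := fun w => `|monomial V1 a w * monomial V2 b w|)).
  - by move=> k; apply: measurable_funM; exact: monomial_sapprox_measurable.
  - by apply: measurable_funM; exact: monomial_measurable.
  - by move=> w; apply: cvgM; exact: monomial_sapprox_cvg.
  - apply/integrable_norm/integrable_mul_sq; try exact: monomial_measurable.
      exact: monomial_sq_integrable mV1 mom1 a.
    exact: monomial_sq_integrable mV2 mom2 b.
  - by move=> k w; rewrite !normrM ler_pM ?monomial_sapprox_bound.
have lim1_2 : (fun k => \int[P]_w (f1 k w * f2 k w)) @ \oo -->
    \int[P]_w monomial V1 a w * \int[P]_w monomial V2 b w.
  under eq_fun do rewrite (rect_simple_factorizes mV1 mV2 V12
    (rect_simple_monomial_sapprox V1 _ a) (rect_simple_monomial_sapprox V2 _ b)).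
  by apply: cvgM; exact: Rintegral_monomial_sapprox_cvg.
exact: cvg_unique lim12 lim1_2.
Qed.

End MonomialFactorization.

Section MevalRV.
Context d (T : measurableType d) (R : realType) (mu : {finite_measure set T -> \bar R}).

Definition meval_rv n (V : 'I_n -> T -> R) (p : mpol n R) w := peval (vec_at V w) p.

Lemma meval_rvE n (V : 'I_n -> T -> R) p : meval_rv V p =
  (fun w => \sum_(m <- mpoly.msupp p) mpoly.mcoeff m p * monomial V m w).
Proof. by apply/funext => w; rewrite /meval_rv mpoly.mevalE. Qed.

Variables (n : nat) (V : 'I_n -> T -> R).
Hypotheses (mV : forall i, measurable_fun setT (V i))
  (momV : forall i p, mu.-integrable setT (fun w => (V i w ^+ p)%:E)).

Lemma meval_rv_measurable p : measurable_fun setT (meval_rv V p).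
Proof.
rewrite meval_rvE; apply: measurable_sum => m.
exact/measurable_funM/monomial_measurable.
Qed.

Lemma meval_rv_integrable p : mu.-integrable setT (EFin \o meval_rv V p).
Proof.
rewrite meval_rvE.
have -> : forall F : mindex n -> T -> R, EFin \o (fun w => \sum_(m <- mpoly.msupp p) F m w) =
    (fun w => \sum_(m <- mpoly.msupp p) (F m w)%:E).
  by move=> F; apply/funext => w /=; rewrite sumEFin.
apply: integrable_sum => // m _; apply: integrableZl_EFin.
exact: monomial_integrable.
Qed.

Lemma meval_rv_sq_integrable p :
  mu.-integrable setT (EFin \o (fun w => meval_rv V p w ^+ 2)).
Proof.
have -> : (fun w => meval_rv V p w ^+ 2) = meval_rv V (p * p).
  by apply/funext => w; rewrite /meval_rv mpoly.mevalM expr2.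
exact: meval_rv_integrable.
Qed.

Lemma integral_meval_rv p :
  (\int[mu]_w (meval_rv V p w)%:E)%E = (\int[mu]_w meval_rv V p w)%:E.
Proof. by rewrite fineK // integrable_fin_num // meval_rv_integrable. Qed.

End MevalRV.

Section MevalRVFactorization.
Context d (T : measurableType d) (R : realType) (P : probability T R).
Variables (n1 n2 : nat) (V1 : 'I_n1 -> T -> R) (V2 : 'I_n2 -> T -> R).
Hypotheses (mV1 : forall i, measurable_fun setT (V1 i))
  (mV2 : forall i, measurable_fun setT (V2 i))
  (mom1 : forall i p, P.-integrable setT (fun w => (V1 i w ^+ p)%:E))
  (mom2 : forall i p, P.-integrable setT (fun w => (V2 i w ^+ p)%:E))
  (V12 : indep_vec P V1 V2).

Lemma meval_rv_factorizes p q : factorizes P (meval_rv V1 p) (meval_rv V2 q).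
Proof.
have m1 := monomial_measurable mV1; have m2 := monomial_measurable mV2.
have sq1 := monomial_sq_integrable mV1 mom1; have sq2 := monomial_sq_integrable mV2 mom2.
rewrite [meval_rv V1 p]meval_rvE; apply: factorizes_suml => a.
- exact: monomial_integrable.
- apply: integrable_mul_sq => //; first exact: meval_rv_measurable.
  exact: meval_rv_sq_integrable.
apply: factorizesC; rewrite meval_rvE; apply: factorizes_suml => b.
- exact: monomial_integrable.
- exact: integrable_mul_sq.
exact/factorizesC/monomial_factorizes.
Qed.

End MevalRVFactorization.

(** * Orthogonality *)

Section Orthogonality.
Context (R : realType) (dT : measure_display) (T : measurableType dT) (P : probability T R).
Variables (l d : nat) (X : 'I_l -> T -> R) (Y : 'I_d -> T -> R) (rho : mpol l R)
  (Pp : nat -> mindex l -> mpol l R) (Rs : mindex d -> mpol d R).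
Local Notation Z := (Zof rho X Y).
Hypotheses (mX : forall i, measurable_fun setT (X i))
  (XZ : indep_vec P X Z)
  (momX : forall i p, P.-integrable setT (fun w => (X i w ^+ p)%:E))
  (momZ : forall j p, P.-integrable setT (fun w => (Z j w ^+ p)%:E))
  (orth_Pp : forall m (k k' : mindex l), mpoly.multinom_val k != mpoly.multinom_val k' ->
     (\int[P]_w (peval (vec_at X w) (Pp m k) * peval (vec_at X w) (Pp m k')
                 * peval (vec_at X w) rho ^+ (2 * m))%:E = 0)%E)
  (orth_Rs : forall (s s' : mindex d), mpoly.multinom_val s != mpoly.multinom_val s' ->
     (\int[P]_w (peval (vec_at Z w) (Rs s) * peval (vec_at Z w) (Rs s'))%:E = 0)%E).

Lemma measurable_Zof j : measurable_fun setT (Z j).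
Proof.
have /integrableP[/measurable_EFinP] := momZ j 1.
by under eq_fun do rewrite expr1.
Qed.

Lemma Gfun_mul k s k' s' w :
  Gfun rho Pp Rs k s (vec_at X w) (vec_at Y w)
  * Gfun rho Pp Rs k' s' (vec_at X w) (vec_at Y w) =
  meval_rv X (Pp (mideg s) k * Pp (mideg s') k' * rho ^+ (mideg s + mideg s')) w *
  meval_rv Z (Rs s * Rs s') w.
Proof. by rewrite /Gfun /meval_rv !mpoly.mevalM rmorphXn exprD; ring. Qed.

Lemma integral_Gfun_mul k s k' s' :
  (\int[P]_w (Gfun rho Pp Rs k s (vec_at X w) (vec_at Y w)
              * Gfun rho Pp Rs k' s' (vec_at X w) (vec_at Y w))%:E)%E =
  (\int[P]_w meval_rv X (Pp (mideg s) k * Pp (mideg s') k' * rho ^+ (mideg s + mideg s')) w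
   * \int[P]_w meval_rv Z (Rs s * Rs s') w)%:E.
Proof.
have mZ := measurable_Zof.
under eq_integral do rewrite Gfun_mul.
rewrite -(meval_rv_factorizes mX mZ momX momZ XZ) fineK // integrable_fin_num //.
apply: integrable_mul_sq; try exact: meval_rv_measurable; exact: meval_rv_sq_integrable.
Qed.

Lemma Gfun_orthogonal k s k' s' :
  (\int[P]_w (Gfun rho Pp Rs k s (vec_at X w) (vec_at Y w)
              * Gfun rho Pp Rs k' s' (vec_at X w) (vec_at Y w))%:E =
   ((mpoly.multinom_val k == mpoly.multinom_val k')
      && (mpoly.multinom_val s == mpoly.multinom_val s'))%:R%:E
   * (\int[P]_w (peval (vec_at X w) (Pp (mideg s) k) ^+ 2
                 * peval (vec_at X w) rho ^+ (2 * mideg s))%:E)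
   * (\int[P]_w (peval (vec_at Z w) (Rs s) ^+ 2)%:E))%E.
Proof.
have mZ := measurable_Zof.
rewrite integral_Gfun_mul.
have [es|ns] := eqVneq (mpoly.multinom_val s) (mpoly.multinom_val s'); last first.
  suff -> : \int[P]_w meval_rv Z (Rs s * Rs s') w = 0 by rewrite mulr0 andbF !mul0e.
  apply: EFin_inj; rewrite -integral_meval_rv //; apply: etrans (orth_Rs ns).
  by apply: eq_integral => w _; rewrite /meval_rv mpoly.mevalM.
have {es} <- : s = s' := val_inj es.
have [ek|nk] := eqVneq (mpoly.multinom_val k) (mpoly.multinom_val k'); last first.
  suff -> : \int[P]_w meval_rv X
      (Pp (mideg s) k * Pp (mideg s) k' * rho ^+ (mideg s + mideg s)) w = 0.
    by rewrite mul0r !mul0e.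
  apply: EFin_inj; rewrite -integral_meval_rv //; apply: etrans (orth_Pp (mideg s) nk).
  by apply: eq_integral => w _; rewrite /meval_rv !mpoly.mevalM rmorphXn addnn -mul2n.
have {ek} <- : k = k' := val_inj ek.
rewrite mul1e EFinM -!integral_meval_rv //; congr (_ * _)%E.
  by apply: eq_integral => w _; rewrite /meval_rv !mpoly.mevalM rmorphXn addnn -mul2n expr2.
by apply: eq_integral => w _; rewrite /meval_rv !mpoly.mevalM expr2.
Qed.

End Orthogonality.

Theorem mainTheorem1 (R : realType) (dT : measure_display) (T : measurableType dT)
  (P : probability T R) (l d : nat)
  (X : 'I_l -> T -> R) (Y : 'I_d -> T -> R) (rho : mpol l R)
  (Pp : nat -> mindex l -> mpol l R) (Rs : mindex d -> mpol d R) :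
  (0 < l)%N -> (0 < d)%N ->
  (forall i, measurable_fun setT (X i)) ->
  (forall j, measurable_fun setT (Y j)) ->
  (msz rho <= 2)%N ->
  {ae P, forall w, peval (vec_at X w) rho != 0} ->
  indep_vec P X (Zof rho X Y) ->
  (forall i (p : nat), P.-integrable setT (fun w => (X i w ^+ p)%:E)) ->
  (forall j (p : nat), P.-integrable setT (fun w => (Zof rho X Y j w ^+ p)%:E)) ->
  (forall m k, msz (Pp m k) = (mideg k).+1) ->
  (forall m (k k' : mindex l), mpoly.multinom_val k != mpoly.multinom_val k' ->
     (\int[P]_w (peval (vec_at X w) (Pp m k) * peval (vec_at X w) (Pp m k')
                 * peval (vec_at X w) rho ^+ (2 * m))%:E = 0)%E) ->
  (forall s, msz (Rs s) = (mideg s).+1) ->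
  (forall (s s' : mindex d), mpoly.multinom_val s != mpoly.multinom_val s' ->
     (\int[P]_w (peval (vec_at (Zof rho X Y) w) (Rs s)
                 * peval (vec_at (Zof rho X Y) w) (Rs s'))%:E = 0)%E) ->
  (forall k s, exists g : mpol (l + d) R,
     msz g = (mideg k + mideg s).+1 /\
     forall x y, peval x rho != 0 -> peval (catv x y) g = Gfun rho Pp Rs k s x y)
  /\
  (forall k s k' s',
     (\int[P]_w (Gfun rho Pp Rs k s (vec_at X w) (vec_at Y w)
                 * Gfun rho Pp Rs k' s' (vec_at X w) (vec_at Y w))%:E =
      ((mpoly.multinom_val k == mpoly.multinom_val k')
         && (mpoly.multinom_val s == mpoly.multinom_val s'))%:R%:E
      * (\int[P]_w (peval (vec_at X w) (Pp (mideg s) k) ^+ 2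
                    * peval (vec_at X w) rho ^+ (2 * mideg s))%:E)
      * (\int[P]_w (peval (vec_at (Zof rho X Y) w) (Rs s) ^+ 2)%:E))%E).
Proof.
(* [0 < l], [0 < d], the measurability of [Y] and [rho(X) != 0] a.s. are not needed:
   the moments of [Z] give its measurability, and [Zof] and [Gfun] both divide by
   [rho(X)], so they agree even where the junk value [x / 0 = 0] is used. *)
move=> _ _ mX _ rho_affine _ XZ momX momZ size_Pp orth_Pp size_Rs orth_Rs.
split=> [k s|k s k' s'].
  exact: Homogenization.homogenized_product_mpoly rho_affine (size_Pp _ k) (size_Rs s).
exact: Gfun_orthogonal.
Qed.
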